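(* Let $f\colon \mathcal{X}\times\mathcal{Y}\to\{0,1\}$ be a function and let $\mu$ be a distribution on $\mathcal{X}\times\mathcal{Y}$ with $\mathrm{supp}(\mu)\subseteq f^{-1}(1)$. Then \[ \mathrm{IC}^{\mathrm{external},1}_{\mu}[f,0]\ \le\ \lim_{q\to\infty}\frac{1}{q}\,\mathrm{CC}^{1^q}_{\mu^q}[f^q,0]. \]
   Context: All logarithms are base 2; all random variables have finite support. For a function $g$ on $\mathcal{X}\times\mathcal{Y}$ and an output value $a$, an $a$-proof for $g$ consists of a random message $M=M(X,Y)$ (a distribution over finite binary strings $m$ for each input $(x,y)$) together with acceptance functions $\mathrm{Acc}_A(x,m)\in\{0,1\}$ and $\mathrm{Acc}_B(y,m)\in\{0,1\}$ such that for all $(x,y)$: (i) if $g(x,y)=a$ then for every $m$ with $\Pr[M=m\mid (x,y)]>0$ we have $\mathrm{Acc}_A(x,m)=1$ and $\mathrm{Acc}_B(y,m)=1$; (ii) if $g(x,y)\ne a$ then for every $m$, $\mathrm{Acc}_A(x,m)=0$ or $\mathrm{Acc}_B(y,m)=0$. For $q\in\mathbb{N}$, $f^q$ is the function on $(\mathcal{X}^q\times\mathcal{Y}^q)$ mapping $((x_1,\dots,x_q),(y_1,\dots,y_q))$ to $(f(x_1,y_1),\dots,f(x_q,y_q))$, and $\mu^q$ is the product distribution (the $q$ pairs $(x_i,y_i)$ are i.i.d. from $\mu$). Define $\mathrm{CC}^{1^q}_{\mu^q}[f^q,0]=\inf\{\mathbb{E}_{(x,y)\sim\mu^q,\,m\sim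 M|_{(x,y)}}|m| : M \text{ a } 1^q\text{-proof for } f^q\}$, where $1^q$ is the all-ones output and $|m|$ is the length of $m$, and $\mathrm{IC}^{\mathrm{external},1}_{\mu}[f,0]=\inf\{I(XY;M): M \text{ a } 1\text{-proof for } f\}$, with $(X,Y)\sim\mu$ and $M\sim M|_{(X,Y)}$, and $I$ denoting mutual information. *)

From HB Require Import structures.
From mathcomp Require Import all_boot all_order all_algebra.
From mathcomp Require Import all_classical all_reals all_analysis.
Set Implicit Arguments. Unset Strict Implicit. Unset Printing Implicit Defensive.
Import Order.TTheory GRing.Theory Num.Theory.
Local Open Scope ring_scope.

Definition log2 {R : realType} (x : R) : R := ln x / ln 2.

Section Proofs.
Variables (R : realType) (X Y : finType) (O : eqType).

(* A random message M = M(x,y): for each input (x,y) a distribution over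
   finite binary strings, with finite support contained in the duplicate-free
   list [ms]; w x y m = Pr[M = m | (x,y)] for m \in ms (and 0 off ms). *)
Definition is_msg_dist (ms : seq (seq bool)) (w : X -> Y -> seq bool -> R) : Prop :=
  [/\ uniq ms,
      (forall x y m, 0 <= w x y m),
      (forall x y m, m \notin ms -> w x y m = 0) &
      (forall x y, \sum_(m <- ms) w x y m = 1)].

Definition is_a_proof (g : X -> Y -> O) (a : O) (ms : seq (seq bool))
    (w : X -> Y -> seq bool -> R)
    (accA : X -> seq bool -> bool) (accB : Y -> seq bool -> bool) : Prop :=
  [/\ is_msg_dist ms w,
      (forall x y, g x y = a -> forall m, 0 < w x y m -> accA x m /\ accB y m) &
      (forall x y, g x y <> a -> forall m, accA x m = false \/ accB y m = false)].

Definition exp_len (mu : X -> Y -> R) (ms : seq (seq bool))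
    (w : X -> Y -> seq bool -> R) : R :=
  \sum_(x : X) \sum_(y : Y) \sum_(m <- ms) mu x y * w x y m * (size m)%:R.

Definition msg_marg (mu : X -> Y -> R) (w : X -> Y -> seq bool -> R) (m : seq bool) : R :=
  \sum_(x : X) \sum_(y : Y) mu x y * w x y m.

Definition ext_info (mu : X -> Y -> R) (ms : seq (seq bool))
    (w : X -> Y -> seq bool -> R) : R :=
  \sum_(x : X) \sum_(y : Y) \sum_(m <- ms)
     (let p := mu x y * w x y m in
      if 0 < p then p * log2 (p / (mu x y * msg_marg mu w m)) else 0).

Local Open Scope ereal_scope.

Definition CC_proof (g : X -> Y -> O) (a : O) (mu : X -> Y -> R) : \bar R :=
  ereal_inf [set r : \bar R | exists ms w accA accB,
     is_a_proof g a ms w accA accB /\ r = (exp_len mu ms w)%:E].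

Definition IC_ext_proof (g : X -> Y -> O) (a : O) (mu : X -> Y -> R) : \bar R :=
  ereal_inf [set r : \bar R | exists ms w accA accB,
     is_a_proof g a ms w accA accB /\ r = (ext_info mu ms w)%:E].

End Proofs.

Definition fpow (X Y : finType) (f : X -> Y -> bool) (q : nat)
    (xs : {ffun 'I_q -> X}) (ys : {ffun 'I_q -> Y}) : {ffun 'I_q -> bool} :=
  [ffun i => f (xs i) (ys i)].

Definition ones (q : nat) : {ffun 'I_q -> bool} := [ffun => true].

Definition mupow {R : realType} (X Y : finType) (mu : X -> Y -> R) (q : nat)
    (xs : {ffun 'I_q -> X}) (ys : {ffun 'I_q -> Y}) : R :=
  \prod_(i < q) mu (xs i) (ys i).

Arguments fpow {X Y} f q xs ys.
Arguments mupow {R X Y} mu q xs ys.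

From HB Require Import structures.
From mathcomp Require Import all_boot all_order all_algebra.
From mathcomp Require Import all_classical all_reals all_analysis.
From mathcomp Require Import ring lra.
Import Order.TTheory GRing.Theory Num.Theory.
Set Implicit Arguments. Unset Strict Implicit. Unset Printing Implicit Defensive.
Local Open Scope ring_scope.

(* The argument has three parts.
   1. Length bounds information: for every message distribution and t > 1,
      I(XY;M) <= log2(2t) E|M| - log2(1 - 1/t).  Indeed I(XY;M) <= H(M), and
      by Gibbs' inequality H(M) is at most the cross-entropy against
      Q(m) = (1 - 1/t) (2t)^-|m|, a sub-probability on any finite set of
      distinct binary strings by a Kraft-type inequality.
   2. Direct sum: a proof for a product problem g ~ (g1, g2) under a product
      distribution mu1 x mu2 supported on accepted inputs splits into a proof
      for g1 (the second coordinate is sampled inside the message) and a proof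
      for g2 (the first coordinate is sampled and prefixed to the message by a
      fixed-length code), and the information is additive (chain rule).
      Iterating over the coordinates, every 1^q-proof for f^q under mu^q
      reveals at least q * IC.
   3. Hence CC_q / q >= (IC + log2(1 - 1/t) / q) / log2(2t); letting q -> oo
      and then t -> 1 gives the liminf bound. *)

Section Logarithms.
Variable R : realType.
Implicit Types p q x y : R.

Lemma ln2_gt0 : 0 < ln (2 : R).
Proof. by apply: ln_gt0; rewrite ltr1n. Qed.

Lemma ln_le_subr1 x : 0 < x -> ln x <= x - 1.
Proof.
move=> x0; have := expR_ge1Dx (ln x); rewrite lnK ?qualifE //.
by move=> h; lra.
Qed.

Lemma log2M x y : 0 < x -> 0 < y -> log2 (x * y) = log2 x + log2 y.
Proof. by move=> x0 y0; rewrite /log2 lnM ?qualifE // mulrDl. Qed.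

Lemma log2V x : 0 < x -> log2 (x^-1) = - log2 x.
Proof. by move=> x0; rewrite /log2 lnV ?qualifE // mulNr. Qed.

Lemma log2_le0 x : x <= 1 -> log2 x <= 0.
Proof.
by move=> x1; rewrite /log2 pmulr_lle0 ?invr_gt0 ?ln2_gt0 //; exact: ln_le0.
Qed.

Lemma gibbs_term p q : 0 <= p -> 0 <= q -> (0 < p -> 0 < q) ->
  (p - q) / ln 2 <= p * log2 (p / q).
Proof.
rewrite le_eqVlt => /orP [/eqP <- q0 _|p0 _ /(_ p0) q0].
  by rewrite mul0r sub0r mulNr oppr_le0 divr_ge0 // ltW // ln2_gt0.
rewrite /log2 mulrA ler_pM2r ?invr_gt0 ?ln2_gt0 //.
have h := ln_le_subr1 (divr_gt0 q0 p0).
have -> : p / q = (q / p)^-1 by rewrite invf_div.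
rewrite lnV ?qualifE ?divr_gt0 //.
have : p * ln (q / p) <= p * (q / p - 1) by rewrite ler_pM2l.
  rewrite mulrBr mulr1 mulrCA divff ?gt_eqF // mulr1 => h2.
  by rewrite mulrN; lra.
exact: divr_gt0.
Qed.

Lemma entropy_le_cross_entropy (I : Type) (s : seq I) (p Q : I -> R) :
  (forall i, 0 <= p i) -> (forall i, 0 < Q i) ->
  \sum_(i <- s) p i = 1 -> \sum_(i <- s) Q i <= 1 ->
  \sum_(i <- s) p i * - log2 (p i) <= \sum_(i <- s) p i * - log2 (Q i).
Proof.
move=> p0 Q0 sum_p sum_Q.
have log_ratio i :
    p i * log2 (p i / Q i) = p i * - log2 (Q i) - p i * - log2 (p i).
  have := p0 i; rewrite le_eqVlt => /orP [/eqP <-|pi0]; first by rewrite !mul0r subr0.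
  by rewrite log2M ?invr_gt0 ?Q0 // log2V ?Q0 //; ring.
have kl_ge0 : 0 <= \sum_(i <- s) p i * log2 (p i / Q i).
  apply: le_trans (ler_sum _ (fun i _ => gibbs_term (p0 i) (ltW (Q0 i)) (fun _ => Q0 i))).
  by rewrite -mulr_suml sumrB sum_p divr_ge0 ?subr_ge0 // ltW // ln2_gt0.
by rewrite -subr_ge0 -sumrB; under eq_bigr do rewrite -log_ratio.
Qed.

End Logarithms.

Section Sums.
Variable R : realType.

Lemma sum_pair (A B : finType) (G : A * B -> R) :
  \sum_(x : A * B) G x = \sum_(a : A) \sum_(b : B) G (a, b).
Proof. by rewrite pair_bigA; apply: eq_bigr => -[]. Qed.

Lemma le_sum_term (I : finType) (F : I -> R) i :
  (forall j, 0 <= F j) -> F i <= \sum_j F j.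
Proof. by move=> F0; rewrite (bigD1 i) //= lerDl sumr_ge0. Qed.

Lemma le_double_sum (A B : finType) (F : A -> B -> R) a b :
  (forall a b, 0 <= F a b) -> F a b <= \sum_a' \sum_b' F a' b'.
Proof.
move=> F0; apply: (le_trans (le_sum_term (F := F a) b (F0 a))).
by apply: (le_sum_term (F := fun a' => \sum_b' F a' b')) => a'; rewrite sumr_ge0.
Qed.

Lemma mulr_gt0_factors (u v : R) : 0 <= u -> 0 <= v -> 0 < u * v -> 0 < u /\ 0 < v.
Proof.
move=> u0 v0; rewrite lt_def mulf_eq0 negb_or => /andP [/andP [hu hv] _].
by rewrite !lt_def hu hv u0 v0.
Qed.

End Sums.

Section MessageLaw.
Variables (R : realType) (X Y : finType).
Variables (mu : X -> Y -> R) (ms : seq (seq bool)) (w : X -> Y -> seq bool -> R).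
Hypothesis mu_ge0 : forall x y, 0 <= mu x y.
Hypothesis mu_sum1 : \sum_(x : X) \sum_(y : Y) mu x y = 1.
Hypothesis hw : is_msg_dist ms w.

Lemma w_ge0 x y m : 0 <= w x y m.
Proof. by case: hw. Qed.

Lemma w_sum1 x y : \sum_(m <- ms) w x y m = 1.
Proof. by case: hw. Qed.

Lemma w_le1 x y m : w x y m <= 1.
Proof.
case: hw => uniq_ms _ w_off _; case: (boolP (m \in ms)) => mi; last by rewrite w_off.
rewrite -(w_sum1 x y) (bigD1_seq m) //= lerDl sumr_ge0 // => *; exact: w_ge0.
Qed.

Lemma joint_le_marg x y m : mu x y * w x y m <= msg_marg mu w m.
Proof.
rewrite /msg_marg; apply: (le_double_sum (F := fun x y => mu x y * w x y m)).
by move=> *; rewrite mulr_ge0 ?w_ge0.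
Qed.

Lemma marg_ge0 m : 0 <= msg_marg mu w m.
Proof. by rewrite sumr_ge0 // => x _; rewrite sumr_ge0 // => y _; rewrite mulr_ge0 // w_ge0. Qed.

Lemma ext_info_E : ext_info mu ms w = \sum_x \sum_y \sum_(m <- ms)
   (mu x y * w x y m) * log2 (mu x y * w x y m / (mu x y * msg_marg mu w m)).
Proof.
apply: eq_bigr => x _; apply: eq_bigr => y _; apply: eq_bigr => m _ /=.
case: ifP => // hp.
have : 0 <= mu x y * w x y m by rewrite mulr_ge0 // w_ge0.
by rewrite le_eqVlt hp orbF => /eqP <-; rewrite mul0r.
Qed.

Lemma sum_marg_weighted (F : seq bool -> R) :
  \sum_(m <- ms) msg_marg mu w m * F m =
  \sum_x \sum_y \sum_(m <- ms) mu x y * w x y m * F m.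
Proof.
rewrite /msg_marg.
transitivity (\sum_(m <- ms) \sum_x \sum_y mu x y * w x y m * F m).
  by apply: eq_bigr => m _; rewrite mulr_suml; apply: eq_bigr => x _; rewrite mulr_suml.
by rewrite exchange_big /=; apply: eq_bigr => x _; rewrite exchange_big.
Qed.

Lemma exp_len_E : exp_len mu ms w = \sum_(m <- ms) msg_marg mu w m * (size m)%:R.
Proof. by rewrite sum_marg_weighted. Qed.

Lemma sum_joint : \sum_x \sum_y \sum_(m <- ms) mu x y * w x y m = 1.
Proof.
rewrite -mu_sum1; apply: eq_bigr => x _; apply: eq_bigr => y _.
by rewrite -mulr_sumr w_sum1 mulr1.
Qed.

Lemma sum_marg : \sum_(m <- ms) msg_marg mu w m = 1.
Proof.
rewrite /msg_marg exchange_big /= -sum_joint; apply: eq_bigr => x _.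
by rewrite exchange_big.
Qed.

Lemma sum_indep : \sum_x \sum_y \sum_(m <- ms) mu x y * msg_marg mu w m = 1.
Proof.
rewrite -mu_sum1; apply: eq_bigr => x _; apply: eq_bigr => y _.
by rewrite -mulr_sumr sum_marg mulr1.
Qed.

(* I(XY;M) is the divergence of the joint law from the product of marginals *)
Lemma ext_info_ge0 : 0 <= ext_info mu ms w.
Proof.
have term_ge x y m :
    (mu x y * w x y m - mu x y * msg_marg mu w m) / ln 2 <=
    mu x y * w x y m * log2 (mu x y * w x y m / (mu x y * msg_marg mu w m)).
  apply: gibbs_term; rewrite ?mulr_ge0 ?w_ge0 ?marg_ge0 // => hp.
  have [mu0 _] := mulr_gt0_factors (mu_ge0 _ _) (w_ge0 _ _ _) hp.
  by rewrite mulr_gt0 // (lt_le_trans hp (joint_le_marg x y m)).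
rewrite ext_info_E; apply: le_trans (ler_sum _ (fun x _ => ler_sum _
   (fun y _ => ler_sum _ (fun m _ => term_ge x y m)))).
have -> : \sum_x \sum_y \sum_(m <- ms)
    (mu x y * w x y m - mu x y * msg_marg mu w m) / ln 2 =
   (\sum_x \sum_y \sum_(m <- ms) mu x y * w x y m -
    \sum_x \sum_y \sum_(m <- ms) mu x y * msg_marg mu w m) / ln 2.
  rewrite -sumrB mulr_suml; apply: eq_bigr => x _; rewrite -sumrB mulr_suml.
  by apply: eq_bigr => y _; rewrite -sumrB mulr_suml.
by rewrite sum_joint sum_indep subrr mul0r.
Qed.

(* I(XY;M) <= H(M): the conditional entropy H(M | XY) is nonnegative *)
Lemma ext_info_le_entropy :
  ext_info mu ms w <= \sum_(m <- ms) msg_marg mu w m * - log2 (msg_marg mu w m).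
Proof.
rewrite sum_marg_weighted ext_info_E.
apply: ler_sum => x _; apply: ler_sum => y _; apply: ler_sum => m _.
have := mulr_ge0 (mu_ge0 x y) (w_ge0 x y m).
rewrite le_eqVlt => /orP [/eqP <-|hp]; first by rewrite !mul0r.
have [mu0 w0] := mulr_gt0_factors (mu_ge0 _ _) (w_ge0 _ _ _) hp.
have marg0 : 0 < msg_marg mu w m by exact: lt_le_trans hp (joint_le_marg x y m).
apply: ler_wpM2l; first exact: ltW.
rewrite invfM mulrACA divff ?gt_eqF // mul1r log2M ?invr_gt0 // log2V //.
by have := log2_le0 (w_le1 x y m); lra.
Qed.

End MessageLaw.

(* the message distribution is determined by the hypothesis [hw] *)
Arguments w_ge0 {R X Y ms w}.
Arguments w_le1 {R X Y ms w}.
Arguments joint_le_marg {R X Y mu ms w}.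
Arguments marg_ge0 {R X Y mu ms w}.
Arguments ext_info_E {R X Y mu ms w}.
Arguments exp_len_E {R X Y mu ms w}.
Arguments sum_marg {R X Y mu ms w}.
Arguments ext_info_ge0 {R X Y mu ms w}.
Arguments ext_info_le_entropy {R X Y mu ms w}.

(* By induction on the maximal length,
   splitting the strings by their first bit; the empty string contributes 1. *)
Section Kraft.
Variables (R : realType) (a S : R).
Hypotheses (a_ge0 : 0 <= a) (S_gt0 : 0 < S) (hS : 1 + 2 * a * S <= S).

Lemma kraft_bounded_length N (ms : seq (seq bool)) : uniq ms ->
  all (fun m => size m < N)%N ms -> \sum_(m <- ms) a ^+ size m <= S.
Proof.
elim: N ms => [|N IH] ms uniq_ms.
  by case: ms uniq_ms => [|m ms] //= _ _; rewrite big_nil ltW.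
move=> short_ms.
have first_bit b : \sum_(m <- ms | ohead m == Some b) a ^+ size m <= a * S.
  rewrite -big_filter.
  set L := [seq behead m | m <- ms & ohead m == Some b].
  have eL : [seq m <- ms | ohead m == Some b] = map (cons b) L.
    rewrite -map_comp; symmetry; apply: map_id_in => m.
    by rewrite mem_filter => /andP [h _]; case: m h => //= b' m' /eqP [->].
  rewrite eL big_map /=.
  under eq_bigr do rewrite exprS.
  rewrite -mulr_sumr ler_wpM2l // IH //.
    rewrite -(map_inj_uniq (fun x y => @congr1 _ _ behead (b :: x) (b :: y))) -eL.
    exact: filter_uniq.
  apply/allP => m' hm'.
  have : b :: m' \in [seq m <- ms | ohead m == Some b] by rewrite eL map_f.
  by rewrite mem_filter => /andP [_ /(allP short_ms)].
have empty : \sum_(m <- ms | m == [::]) a ^+ size m <= 1.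
  rewrite -big_filter; case: (boolP ([::] \in ms)) => hin.
    by rewrite filter_pred1_uniq // big_seq1 expr0.
  rewrite (eq_in_filter (a2 := pred0)); first by rewrite filter_pred0 big_nil ler01.
  by move=> m hm /=; apply/eqP => e; rewrite -e hm in hin.
have nonempty : \sum_(m <- ms | ~~ (m == [::])) a ^+ size m =
   \sum_(m <- ms | ohead m == Some true) a ^+ size m +
   \sum_(m <- ms | ohead m == Some false) a ^+ size m.
  rewrite (bigID (fun m => ohead m == Some true)) /=; congr (_ + _).
    by apply: eq_bigl => -[|[] m].
  by apply: eq_bigl => -[|[] m].
rewrite (bigID (fun m => m == [::])) /= nonempty; apply: le_trans hS.
by have := first_bit true; have := first_bit false; lra.
Qed.

Lemma kraft (ms : seq (seq bool)) : uniq ms -> \sum_(m <- ms) a ^+ size m <= S.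
Proof.
move=> uniq_ms; apply: (@kraft_bounded_length (\max_(m <- ms) size m).+1) => //.
by apply/allP => m hm; rewrite ltnS (@leq_bigmax_seq _ ms xpredT size m hm erefl).
Qed.

End Kraft.

(* The reference sub-probability Q_t(m) = (1 - 1/t) (2t)^-|m| on binary
   strings, whose code length -log2 Q_t(m) is affine in |m|. *)
Definition ref_prob (R : realType) (t : R) (m : seq bool) : R :=
  (1 - t^-1) * ((2 * t)^-1) ^+ size m.

Section ReferenceProbability.
Variables (R : realType) (t : R).
Hypothesis t_gt1 : 1 < t.

Let t_gt0 : 0 < t. Proof. exact: lt_trans ltr01 t_gt1. Qed.
Let c_gt0 : 0 < 1 - t^-1. Proof. by rewrite subr_gt0 invf_lt1. Qed.

Lemma ref_prob_gt0 m : 0 < ref_prob t m.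
Proof.
have t0 := t_gt0; have c0 := c_gt0.
by rewrite /ref_prob mulr_gt0 // exprn_gt0 // invr_gt0 mulr_gt0.
Qed.

Lemma ref_prob_sum_le1 (ms : seq (seq bool)) : uniq ms -> \sum_(m <- ms) ref_prob t m <= 1.
Proof.
move=> uniq_ms; have t0 := t_gt0; have c0 := c_gt0.
rewrite /ref_prob -mulr_sumr.
have kraft_ms := @kraft R ((2 * t)^-1) (1 - t^-1)^-1.
rewrite (le_trans (ler_wpM2l (ltW c0) (kraft_ms _ _ _ ms uniq_ms))) ?divff ?gt_eqF //.
- by rewrite ltW // invr_gt0 mulr_gt0.
- by rewrite invr_gt0.
by rewrite le_eqVlt; apply/orP; left; apply/eqP; field; rewrite subr_eq0 !gt_eqF.
Qed.

Lemma ref_prob_code_length m :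
  - log2 (ref_prob t m) = - log2 (1 - t^-1) + (size m)%:R * log2 (2 * t).
Proof.
have t0 := t_gt0; have c0 := c_gt0.
rewrite /ref_prob (log2M c0) ?exprn_gt0 ?invr_gt0 ?mulr_gt0 //.
rewrite /log2 lnXn ?invr_gt0 ?mulr_gt0 // lnV ?qualifE /= ?mulr_gt0 //.
rewrite mulrnAl -mulr_natl; ring.
Qed.

End ReferenceProbability.

Lemma info_le_length (R : realType) (X Y : finType) (mu : X -> Y -> R)
    (ms : seq (seq bool)) (w : X -> Y -> seq bool -> R) (t : R) :
  (forall x y, 0 <= mu x y) -> \sum_(x : X) \sum_(y : Y) mu x y = 1 ->
  is_msg_dist ms w -> 1 < t ->
  ext_info mu ms w <= log2 (2 * t) * exp_len mu ms w - log2 (1 - t^-1).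
Proof.
move=> mu_ge0 mu_sum1 hw t_gt1; have uniq_ms : uniq ms by case: hw.
apply: le_trans (ext_info_le_entropy mu_ge0 hw) _.
apply: le_trans (entropy_le_cross_entropy (marg_ge0 mu_ge0 hw) (ref_prob_gt0 t_gt1)
  (sum_marg mu_sum1 hw) (ref_prob_sum_le1 t_gt1 uniq_ms)) _.
under eq_bigr do rewrite ref_prob_code_length // mulrDr.
rewrite big_split /= -mulr_suml (sum_marg mu_sum1 hw) mul1r exp_len_E mulr_sumr addrC.
rewrite le_eqVlt; apply/orP; left; apply/eqP; congr (_ - _).
by apply: eq_bigr => m _; rewrite mulrA mulrC.
Qed.

(* It lets a message carry a sampled input. *)
Section Code.
Variable T : finType.
Definition code_len := size (index_enum T).
Definition code (z : T) : seq bool := [seq j == z | j <- index_enum T].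
Definition decode (m : seq bool) : option T := [pick z | code z == take code_len m].

Lemma size_code z : size (code z) = code_len.
Proof. by rewrite /code size_map. Qed.

Lemma code_inj : injective code.
Proof.
move=> z z' /eq_in_map h; have := h z (mem_index_enum z).
by rewrite eqxx => /esym/eqP.
Qed.

Lemma decode_code z m : decode (code z ++ m) = Some z.
Proof.
rewrite /decode take_size_cat ?size_code //; case: pickP => [z' /eqP /code_inj -> //|].
by move=> /(_ z); rewrite eqxx.
Qed.

Lemma drop_code z m : drop code_len (code z ++ m) = m.
Proof. by rewrite drop_size_cat ?size_code. Qed.

Lemma decode_some m z : decode m = Some z -> m = code z ++ drop code_len m.
Proof.
rewrite /decode; case: pickP => [z' /eqP h [<-]|//].
by rewrite h cat_take_drop.
Qed.

Lemma code_cat_inj z z' m m' : code z ++ m = code z' ++ m' -> z = z' /\ m = m'.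
Proof.
move=> e; have := congr1 decode e; rewrite !decode_code => -[ez]; split => //.
by have := congr1 (drop code_len) e; rewrite !drop_code.
Qed.
End Code.

(* Part 2, one step: a proof for g under mu = mu1 x mu2 splits into a proof
   for g1 under mu1 and a proof for g2 under mu2 with additive information. *)
Section Split.
Variables (R : realType) (A1 B1 A2 B2 : finType) (O O1 : eqType).
Variables (g : A1 * A2 -> B1 * B2 -> O) (a : O) (g1 : A1 -> B1 -> O1) (a1 : O1)
  (g2 : A2 -> B2 -> bool).
Hypothesis hg : forall x1 x2 y1 y2,
  (g (x1, x2) (y1, y2) == a) = (g1 x1 y1 == a1) && g2 x2 y2.
Variables (mu : A1 * A2 -> B1 * B2 -> R) (mu1 : A1 -> B1 -> R) (mu2 : A2 -> B2 -> R).
Hypothesis hmu : forall x1 x2 y1 y2, mu (x1, x2) (y1, y2) = mu1 x1 y1 * mu2 x2 y2.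
Hypothesis mu1_ge0 : forall x y, 0 <= mu1 x y.
Hypothesis mu2_ge0 : forall x y, 0 <= mu2 x y.
Hypothesis mu1_sum1 : \sum_x \sum_y mu1 x y = 1.
Hypothesis mu2_sum1 : \sum_x \sum_y mu2 x y = 1.
Hypothesis supp1 : forall x y, 0 < mu1 x y -> g1 x y = a1.
Hypothesis supp2 : forall x y, 0 < mu2 x y -> g2 x y.
Variables (ms : seq (seq bool)) (w : A1 * A2 -> B1 * B2 -> seq bool -> R)
  (accA : A1 * A2 -> seq bool -> bool) (accB : B1 * B2 -> seq bool -> bool).
Hypothesis hP : is_a_proof g a ms w accA accB.

Let hw : is_msg_dist ms w. Proof. by case: hP. Qed.
Let hW x y m : 0 <= w x y m. Proof. exact: (w_ge0 hw x y m). Qed.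

(* First proof: the second coordinate is sampled from mu2 inside the message;
   each party accepts if some completion of its input is accepted. *)
Definition w_first x1 y1 m := \sum_x2 \sum_y2 mu2 x2 y2 * w (x1, x2) (y1, y2) m.
Definition accA_first x1 m := [exists x2, accA (x1, x2) m].
Definition accB_first y1 m := [exists y2, accB (y1, y2) m].

Lemma w_first_ge0 x y m : 0 <= w_first x y m.
Proof. by apply: sumr_ge0 => ? _; apply: sumr_ge0 => ? _; rewrite mulr_ge0. Qed.

Lemma w_first_ge x1 y1 x2 y2 m : mu2 x2 y2 * w (x1, x2) (y1, y2) m <= w_first x1 y1 m.
Proof.
rewrite /w_first.
apply: (le_double_sum (F := fun x2 y2 => mu2 x2 y2 * w (x1, x2) (y1, y2) m)).
by move=> a2 b2; exact: mulr_ge0 (mu2_ge0 a2 b2) (hW _ _ _).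
Qed.

Lemma first_proof : is_a_proof g1 a1 ms w_first accA_first accB_first.
Proof.
case: hP => [[u _ h0 h1] hc hs]; split.
- split => //; first exact: w_first_ge0.
  + by move=> x y m hm; apply: big1 => x2 _; apply: big1 => y2 _; rewrite h0 // mulr0.
  + move=> x1 y1; rewrite /w_first exchange_big /= -mu2_sum1; apply: eq_bigr => x2 _.
    by rewrite exchange_big /=; apply: eq_bigr => y2 _; rewrite -mulr_sumr h1 mulr1.
- move=> x1 y1 e m hm.
  case: (boolP [exists x2, [exists y2, 0 < mu2 x2 y2 * w (x1, x2) (y1, y2) m]]).
    move=> /existsP [x2 /existsP [y2 hp]].
    have [hm2 w_pos] := mulr_gt0_factors (mu2_ge0 _ _) (hW _ _ _) hp.
    have eg : g (x1, x2) (y1, y2) = a by apply/eqP; rewrite hg e eqxx supp2.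
    have [hA hB] := hc _ _ eg m w_pos.
    by split; apply/existsP; [exists x2|exists y2].
  rewrite negb_exists => /forallP hn; exfalso; move: hm; rewrite /w_first big1 ?ltxx //.
  move=> x2 _; apply: big1 => y2 _; have := hn x2; rewrite negb_exists => /forallP /(_ y2).
  by rewrite lt_def negb_and negbK mulr_ge0 // orbF => /eqP.
- move=> x1 y1 e m; case: (boolP (accA_first x1 m)) => [/existsP [x2 hA]|_]; last by left.
  right; apply/negbTE/existsP => -[y2 hB].
  have ng : g (x1, x2) (y1, y2) <> a.
    by move/eqP; rewrite hg => /andP [/eqP].
  by case: (hs _ _ ng m); rewrite ?hA ?hB.
Qed.

(* Second proof: a sample z = (x1,y1) of mu1 is sent in the clear, as the
   prefix code(z), followed by the original message on the completed input. *)
Let n := code_len (A1 * B1)%type.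
Let cd := @code (A1 * B1)%type.
Let dc := @decode (A1 * B1)%type.

Definition ms_second := [seq cd z ++ m | z <- index_enum (A1 * B1)%type, m <- ms].
Definition w_second x2 y2 m' :=
  if dc m' is Some z then mu1 z.1 z.2 * w (z.1, x2) (z.2, y2) (drop n m') else 0.
Definition accA_second x2 m' := if dc m' is Some z then accA (z.1, x2) (drop n m') else false.
Definition accB_second y2 m' := if dc m' is Some z then accB (z.2, y2) (drop n m') else false.

Lemma w_second_code x2 y2 z m : w_second x2 y2 (cd z ++ m) = mu1 z.1 z.2 * w (z.1, x2) (z.2, y2) m.
Proof. by rewrite /w_second /dc /cd decode_code drop_code. Qed.

Lemma sum_ms_second (F : seq bool -> R) :
  \sum_(m' <- ms_second) F m' = \sum_(z : A1 * B1) \sum_(m <- ms) F (cd z ++ m).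
Proof. by rewrite /ms_second big_allpairs_dep. Qed.

Lemma second_proof : is_a_proof g2 true ms_second w_second accA_second accB_second.
Proof.
case: hP => [[u _ h0 h1] hc hs]; split.
- split.
  + apply: allpairs_uniq => //; first exact: index_enum_uniq.
    by move=> [z m] [z' m'] _ _ /= /code_cat_inj [-> ->].
  + by move=> x y m; rewrite /w_second; case: (dc m) => // z; rewrite mulr_ge0.
  + move=> x2 y2 m' hm'; rewrite /w_second; case e: (dc m') => [z|] //.
    rewrite h0 ?mulr0 //; apply: contra hm' => hd.
    rewrite (decode_some e); apply: allpairs_f => //; exact: mem_index_enum.
  + move=> x2 y2; rewrite sum_ms_second -mu1_sum1 sum_pair; apply: eq_bigr => x1 _.
    apply: eq_bigr => y1 _; under eq_bigr do rewrite w_second_code.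
    by rewrite -mulr_sumr h1 mulr1.
- move=> x2 y2 e m' hm; move: hm; rewrite /w_second /accA_second /accB_second.
  case: (dc m') => [[x1 y1]|]; last by rewrite ltxx.
  move=> /= hp; have [hm1 w_pos] := mulr_gt0_factors (mu1_ge0 _ _) (hW _ _ _) hp.
  have eg : g (x1, x2) (y1, y2) = a by apply/eqP; rewrite hg e supp1 // eqxx.
  exact: hc _ _ eg _ w_pos.
- move=> x2 y2 e m'; rewrite /accA_second /accB_second; case: (dc m') => [[x1 y1]|]; last by left.
  have ng : g (x1, x2) (y1, y2) <> a.
    by move/eqP; rewrite hg => /andP [_ h]; apply: e.
  exact: hs.
Qed.

Lemma mu_prod_ge0 x y : 0 <= mu x y.
Proof. by case: x y => x1 x2 [y1 y2]; rewrite hmu mulr_ge0. Qed.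

Let hw_first : is_msg_dist ms w_first. Proof. by case: first_proof. Qed.
Let hw_second : is_msg_dist ms_second w_second. Proof. by case: second_proof. Qed.

Lemma marg_first m : msg_marg mu1 w_first m = msg_marg mu w m.
Proof.
rewrite /msg_marg sum_pair; apply: eq_bigr => x1 _.
under [RHS]eq_bigr do rewrite sum_pair.
rewrite [RHS]exchange_big /=; apply: eq_bigr => y1 _.
rewrite /w_first mulr_sumr; apply: eq_bigr => x2 _; rewrite mulr_sumr; apply: eq_bigr => y2 _.
by rewrite hmu mulrA.
Qed.

Lemma marg_second z m : msg_marg mu2 w_second (cd z ++ m) = mu1 z.1 z.2 * w_first z.1 z.2 m.
Proof.
rewrite /msg_marg /w_first mulr_sumr; apply: eq_bigr => x2 _; rewrite mulr_sumr.
by apply: eq_bigr => y2 _; rewrite w_second_code mulrCA.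
Qed.

Section Reorder.
Variable F : A1 -> A2 -> B1 -> B2 -> seq bool -> R.
Definition sum5 := \sum_x1 \sum_x2 \sum_y1 \sum_y2 \sum_(m <- ms) F x1 x2 y1 y2 m.

Lemma sum5_first_order : \sum_x1 \sum_y1 \sum_(m <- ms) \sum_x2 \sum_y2 F x1 x2 y1 y2 m = sum5.
Proof.
rewrite /sum5; apply: eq_bigr => x1 _.
transitivity (\sum_y1 \sum_x2 \sum_y2 \sum_(m <- ms) F x1 x2 y1 y2 m); last first.
  by rewrite exchange_big.
apply: eq_bigr => y1 _; rewrite exchange_big; apply: eq_bigr => x2 _.
by rewrite exchange_big.
Qed.

Lemma sum5_second_order : \sum_x2 \sum_y2 \sum_x1 \sum_y1 \sum_(m <- ms) F x1 x2 y1 y2 m = sum5.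
Proof.
rewrite /sum5.
transitivity (\sum_x2 \sum_x1 \sum_y2 \sum_y1 \sum_(m <- ms) F x1 x2 y1 y2 m).
  by apply: eq_bigr => x2 _; exact: exchange_big.
rewrite exchange_big /=; apply: eq_bigr => x1 _; apply: eq_bigr => x2 _; exact: exchange_big.
Qed.
End Reorder.

Definition joint x1 x2 y1 y2 m := mu1 x1 y1 * mu2 x2 y2 * w (x1, x2) (y1, y2) m.
Definition info_term x1 x2 y1 y2 m := joint x1 x2 y1 y2 m *
  log2 (joint x1 x2 y1 y2 m / (mu1 x1 y1 * mu2 x2 y2 * msg_marg mu w m)).
Definition info_term_first x1 x2 y1 y2 m := joint x1 x2 y1 y2 m *
  log2 (mu1 x1 y1 * w_first x1 y1 m / (mu1 x1 y1 * msg_marg mu w m)).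
Definition info_term_second x1 x2 y1 y2 m := mu2 x2 y2 * (mu1 x1 y1 * w (x1, x2) (y1, y2) m) *
  log2 (mu2 x2 y2 * (mu1 x1 y1 * w (x1, x2) (y1, y2) m) /
        (mu2 x2 y2 * (mu1 x1 y1 * w_first x1 y1 m))).

Lemma info_terms : ext_info mu ms w = sum5 info_term.
Proof.
rewrite (ext_info_E mu_prod_ge0 hw) sum_pair /sum5; apply: eq_bigr => x1 _.
apply: eq_bigr => x2 _; rewrite sum_pair; apply: eq_bigr => y1 _.
by apply: eq_bigr => y2 _; apply: eq_bigr => m _; rewrite /info_term /joint hmu.
Qed.

Lemma info_first_terms : ext_info mu1 ms w_first = sum5 info_term_first.
Proof.
rewrite (ext_info_E mu1_ge0 hw_first) -sum5_first_order; apply: eq_bigr => x1 _.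
apply: eq_bigr => y1 _; apply: eq_bigr => m _.
rewrite marg_first; set L := log2 _.
rewrite /w_first mulr_sumr mulr_suml; apply: eq_bigr => x2 _.
rewrite mulr_sumr mulr_suml; apply: eq_bigr => y2 _.
by rewrite /info_term_first /joint /L /w_first mulrA.
Qed.

Lemma info_second_terms : ext_info mu2 ms_second w_second = sum5 info_term_second.
Proof.
rewrite (ext_info_E mu2_ge0 hw_second) -sum5_second_order; apply: eq_bigr => x2 _.
apply: eq_bigr => y2 _; rewrite sum_ms_second sum_pair; apply: eq_bigr => x1 _.
by apply: eq_bigr => y1 _; apply: eq_bigr => m _; rewrite w_second_code marg_second /info_term_second.
Qed.

(* the chain rule, term by term: log of a product of two likelihood ratios *)
Lemma info_term_split x1 x2 y1 y2 m :
  info_term x1 x2 y1 y2 m = info_term_first x1 x2 y1 y2 m + info_term_second x1 x2 y1 y2 m.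
Proof.
have e2 : mu2 x2 y2 * (mu1 x1 y1 * w (x1, x2) (y1, y2) m) = joint x1 x2 y1 y2 m.
  by rewrite /joint mulrCA mulrA.
rewrite /info_term /info_term_first /info_term_second e2.
have : 0 <= joint x1 x2 y1 y2 m by rewrite /joint !mulr_ge0.
rewrite le_eqVlt => /orP [/eqP <-|hp]; first by rewrite !mul0r addr0.
have [h12 hW0] := mulr_gt0_factors (mulr_ge0 (mu1_ge0 _ _) (mu2_ge0 _ _)) (hW _ _ _) hp.
have [hm1 hm2] := mulr_gt0_factors (mu1_ge0 _ _) (mu2_ge0 _ _) h12.
have hw10 : 0 < w_first x1 y1 m := lt_le_trans (mulr_gt0 hm2 hW0) (w_first_ge _ _ _ _ _).
have hmg : 0 < msg_marg mu w m.
  apply: lt_le_trans (joint_le_marg mu_prod_ge0 hw (x1, x2) (y1, y2) m).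
  by rewrite hmu; move: hp; rewrite /joint.
rewrite -mulrDr -log2M; last 2 first.
- by rewrite divr_gt0 ?mulr_gt0.
- by rewrite divr_gt0 ?mulr_gt0 //; rewrite -e2.
congr (_ * log2 _); rewrite -e2; field.
by rewrite !gt_eqF.
Qed.

(* I(XY;M) = I(X1Y1;M) + I(X2Y2; X1Y1,M) *)
Lemma info_chain_rule :
  ext_info mu ms w = ext_info mu1 ms w_first + ext_info mu2 ms_second w_second.
Proof.
rewrite info_terms info_first_terms info_second_terms /sum5 -!big_split /=.
apply: eq_bigr => x1 _.
rewrite -!big_split /=; apply: eq_bigr => x2 _.
rewrite -!big_split /=; apply: eq_bigr => y1 _.
rewrite -!big_split /=; apply: eq_bigr => y2 _.
rewrite -!big_split /=; apply: eq_bigr => m _.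
exact: info_term_split.
Qed.

End Split.


Lemma sum_bijective (R : realType) (A A' : finType) (e : A' -> A) (F : A -> R) :
  bijective e -> \sum_(x : A) F x = \sum_(x : A') F (e x).
Proof. by move=> be; rewrite (reindex e) //; exact: onW_bij. Qed.

Section Transport.
Variables (R : realType) (A B A' B' : finType) (O : eqType) (g : A -> B -> O) (a : O).
Variables (eA : A' -> A) (eB : B' -> B).
Hypotheses (bA : bijective eA) (bB : bijective eB).
Variables (mu : A -> B -> R) (ms : seq (seq bool)) (w : A -> B -> seq bool -> R)
  (accA : A -> seq bool -> bool) (accB : B -> seq bool -> bool).

Lemma transport_proof : is_a_proof g a ms w accA accB ->
  is_a_proof (fun x y => g (eA x) (eB y)) a ms (fun x y => w (eA x) (eB y))
    (fun x => accA (eA x)) (fun y => accB (eB y)).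
Proof.
case=> [[u h0 h1 h2] hc hs]; split => //.
- by split => // x y m hm; apply: h1.
- by move=> x y e m hm; apply: hc.
- by move=> x y e m; apply: hs.
Qed.

Lemma transport_info : ext_info (fun x y => mu (eA x) (eB y)) ms (fun x y => w (eA x) (eB y))
  = ext_info mu ms w.
Proof.
have hm m : msg_marg (fun x y => mu (eA x) (eB y)) (fun x y => w (eA x) (eB y)) m =
            msg_marg mu w m.
  rewrite /msg_marg (sum_bijective _ bA); apply: eq_bigr => x _.
  by rewrite (sum_bijective _ bB).
rewrite /ext_info [RHS](sum_bijective _ bA); apply: eq_bigr => x _.
rewrite [RHS](sum_bijective _ bB).
by apply: eq_bigr => y _; apply: eq_bigr => m _; rewrite hm.
Qed.
End Transport.

Section Join.
Variable T : Type.
Definition join q (xs : {ffun 'I_q -> T}) (x : T) : {ffun 'I_q.+1 -> T} :=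
  [ffun i => if unlift ord0 i is Some j then xs j else x].
Definition splitf q (xs : {ffun 'I_q.+1 -> T}) : {ffun 'I_q -> T} * T :=
  ([ffun j => xs (lift ord0 j)], xs ord0).

Lemma join0 q xs x : @join q xs x ord0 = x.
Proof. by rewrite ffunE unlift_none. Qed.
Lemma joinS q xs x j : @join q xs x (lift ord0 j) = xs j.
Proof. by rewrite ffunE liftK. Qed.

Lemma join_bij q : bijective (fun p : {ffun 'I_q -> T} * T => join p.1 p.2).
Proof.
exists (@splitf q).
  by move=> [xs x]; rewrite /splitf /= join0; congr pair; apply/ffunP => j; rewrite ffunE joinS.
move=> xs; apply/ffunP => i; rewrite /splitf /= ffunE.
by case: unliftP => [j ->|->] //; rewrite ffunE.
Qed.
End Join.

Section Pow.
Variables (R : realType) (X Y : finType) (f : X -> Y -> bool) (mu : X -> Y -> R).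
Hypothesis mu_ge0 : forall x y, 0 <= mu x y.
Hypothesis mu_sum1 : \sum_(x : X) \sum_(y : Y) mu x y = 1.
Hypothesis mu_supp : forall x y, 0 < mu x y -> f x y = true.

Lemma mupow_join q xs x ys y :
  mupow mu q.+1 (join xs x) (join ys y) = mupow mu q xs ys * mu x y.
Proof.
rewrite /mupow big_ord_recl !join0 mulrC; congr (_ * _).
by apply: eq_bigr => i _; rewrite !joinS.
Qed.

Lemma fpow_ones q xs ys : (fpow f q xs ys == ones q) = [forall i, f (xs i) (ys i)].
Proof.
apply/eqP/forallP => [e i | h].
  by have := congr1 (fun g : {ffun _ -> bool} => g i) e; rewrite /= !ffunE.
by apply/ffunP => i; rewrite !ffunE h.
Qed.

Lemma fpow_join q xs x ys y :
  (fpow f q.+1 (join xs x) (join ys y) == ones q.+1) = (fpow f q xs ys == ones q) && f x y.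
Proof.
rewrite !fpow_ones; apply/forallP/andP => [h|[/forallP h hxy] i].
  split; last by have := h ord0; rewrite !join0.
  by apply/forallP => j; have := h (lift ord0 j); rewrite !joinS.
by case: (unliftP ord0 i) => [j ->|->]; rewrite ?joinS ?join0.
Qed.

Lemma mupow_ge0 q xs ys : 0 <= mupow mu q xs ys.
Proof. by apply: prodr_ge0 => i _. Qed.

Lemma mupow_supp q xs ys : 0 < mupow mu q xs ys -> fpow f q xs ys = ones q.
Proof.
move=> hp; apply/eqP; rewrite fpow_ones; apply/forallP => i; apply: mu_supp.
rewrite lt_def mu_ge0 andbT; apply/eqP => e; move: hp.
by rewrite /mupow (bigD1 i) //= e mul0r ltxx.
Qed.

Lemma sum_join (Z : finType) q (F : {ffun 'I_q.+1 -> Z} -> R) :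
  \sum_xs F xs = \sum_(xs : {ffun 'I_q -> Z}) \sum_(x : Z) F (join xs x).
Proof.
by rewrite (sum_bijective _ (join_bij Z q)) sum_pair.
Qed.

Lemma mupow_sum1 q : \sum_xs \sum_ys mupow mu q xs ys = 1.
Proof.
elim: q => [|q IH].
  rewrite /mupow; under eq_bigr do under eq_bigr do rewrite big_ord0.
  rewrite sumr_const /= sumr_const /= card_ffun card_ord expn0.
  by rewrite card_ffun card_ord expn0.
rewrite sum_join.
transitivity (\sum_(xs : {ffun 'I_q -> X}) \sum_(ys : {ffun 'I_q -> Y})
               \sum_x \sum_y mupow mu q xs ys * mu x y).
  apply: eq_bigr => xs _; under eq_bigr do rewrite sum_join.
  rewrite exchange_big /=; apply: eq_bigr => ys _; apply: eq_bigr => x _; apply: eq_bigr => y _.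
  by rewrite mupow_join.
rewrite -IH; apply: eq_bigr => xs _; apply: eq_bigr => ys _.
by rewrite -[RHS]mulr1 -mu_sum1 mulr_sumr; apply: eq_bigr => x _; rewrite mulr_sumr.
Qed.

End Pow.


Section DirectSum.
Variables (R : realType) (X Y : finType) (f : X -> Y -> bool) (mu : X -> Y -> R).
Hypothesis mu_ge0 : forall x y, 0 <= mu x y.
Hypothesis mu_sum1 : \sum_(x : X) \sum_(y : Y) mu x y = 1.
Hypothesis mu_supp : forall x y, 0 < mu x y -> f x y = true.

Local Open Scope ereal_scope.

(* Part 2: a 1^q-proof for f^q reveals at least q IC, by induction on q,
   splitting off the last coordinate with info_chain_rule. *)
Lemma q_IC_le_info q : forall ms w accA accB,
  is_a_proof (fpow f q) (ones q) ms w accA accB ->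
  (q%:R)%:E * IC_ext_proof f true mu <= (ext_info (mupow mu q) ms w)%:E.
Proof.
elim: q => [|q IH] ms w aA aB hp.
  rewrite mul0e lee_fin; apply: (ext_info_ge0 (@mupow_ge0 _ _ _ mu mu_ge0 0)
     (@mupow_sum1 _ _ _ mu mu_sum1 0)); by case: hp.
(* view inputs of length q+1 as pairs (inputs of length q, last input) *)
pose eA := (fun p : {ffun 'I_q -> X} * X => join p.1 p.2).
pose eB := (fun p : {ffun 'I_q -> Y} * Y => join p.1 p.2).
have hp_pair := @transport_proof R _ _ _ _ _ _ _ eA eB ms w aA aB hp.
rewrite -(@transport_info R _ _ _ _ eA eB (join_bij X q) (join_bij Y q) (mupow mu q.+1) ms w).
have accept_split : forall x1 x2 y1 y2,
   ((fun x y => fpow f q.+1 (eA x) (eB y)) (x1, x2) (y1, y2) == ones q.+1) =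
   (fpow f q x1 y1 == ones q) && f x2 y2.
  by move=> x1 x2 y1 y2; exact: fpow_join.
have mu_split : forall x1 x2 y1 y2,
   (fun x y => mupow mu q.+1 (eA x) (eB y)) (x1, x2) (y1, y2) = (mupow mu q x1 y1 * mu x2 y2)%R.
  by move=> x1 x2 y1 y2; exact: mupow_join.
have muq_ge0 := @mupow_ge0 _ _ _ mu mu_ge0 q.
have muq_sum1 := @mupow_sum1 _ _ _ mu mu_sum1 q.
have muq_supp := @mupow_supp _ _ _ f mu mu_ge0 mu_supp q.
rewrite (info_chain_rule accept_split mu_split muq_ge0 mu_ge0 muq_sum1 mu_sum1
  muq_supp mu_supp hp_pair).
rewrite EFinD -addn1 natrD EFinD ge0_muleDl ?lee_fin // mul1e.
(* the first part is a 1^q-proof for f^q, the second a 1-proof for f *)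
apply: leeD.
  exact: (IH _ _ _ _ (first_proof accept_split mu_ge0 mu_sum1 mu_supp hp_pair)).
apply: ereal_inf_lbound; do 4 eexists; split; last reflexivity.
exact: (second_proof accept_split muq_ge0 muq_sum1 muq_supp hp_pair).
Qed.

End DirectSum.

(* log2 (2t) tends to 1 as t -> 1: for 0 < r < v some t > 1 has r log2 (2t) < v *)
Lemma exists_close_t (R : realType) (r v : R) : 0 < r -> r < v ->
  exists2 t : R, 1 < t & r * log2 (2 * t) < v.
Proof.
move=> r0 rv; have ln20 := @ln2_gt0 R.
have vr1 : 1 < v / r by rewrite ltr_pdivlMr // mul1r.
pose s := (v / r - 1) * ln 2 / 2.
have s0 : 0 < s by rewrite /s divr_gt0 // mulr_gt0 // subr_gt0.
have t0 : 0 < 1 + s by rewrite addr_gt0.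
exists (1 + s); first by rewrite ltrDl.
have log_le : log2 (2 * (1 + s)) <= 1 + (v / r - 1) / 2.
  rewrite log2M // (_ : log2 2 = 1); last by rewrite /log2 divff // gt_eqF.
  rewrite lerD2l /log2 ler_pdivrMr //; apply: le_trans (ln_le_subr1 t0) _.
  by rewrite le_eqVlt; apply/orP; left; apply/eqP; rewrite /s; ring.
have h : r * log2 (2 * (1 + s)) <= (r + v) / 2.
  have -> : (r + v) / 2 = r * (1 + (v / r - 1) / 2) by field; rewrite gt_eqF.
  by rewrite ler_pM2l.
by apply: le_lt_trans h _; lra.
Qed.


Section Liminf.
Variable R : realType.
Local Open Scope ereal_scope.

Lemma limn_einf_ge (u : nat -> \bar R) (r : R) (N : nat) :
  (forall q, (N <= q)%N -> r%:E <= u q) -> r%:E <= limn_einf u.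
Proof.
move=> hN; rewrite limn_einf_lim; apply: lime_ge; first exact: is_cvg_einfs.
exists N => // n /= hn; apply/ereal_infP => _ [k /= hk <-]; apply: hN.
exact: leq_trans hn hk.
Qed.

Lemma le_by_real_gaps (a b : \bar R) : 0 <= b ->
  (forall r v : R, (0 < r)%R -> (r < v)%R -> v%:E <= a -> r%:E <= b) -> a <= b.
Proof.
move=> b0 gaps; case: (leP a b) => // ba.
move: b0 ba gaps; case: b => [l| |] //; last by move=> _; rewrite ltNge leey.
rewrite lee_fin => l0 la gaps.
have [v lv va] : exists2 v : R, (l < v)%R & v%:E <= a.
  move: la; case: a {gaps} => [v0||] //; first by rewrite lte_fin => h; exists v0.
  by move=> _; exists (l + 1)%R; [rewrite ltrDl | rewrite leey].
have r0 : (0 < (l + v) / 2)%R by lra.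
have rv : ((l + v) / 2 < v)%R by lra.
by have := gaps _ _ r0 rv va; rewrite lee_fin => h; exfalso; lra.
Qed.

End Liminf.

Section Amortized.
Variables (R : realType) (X Y : finType) (f : X -> Y -> bool) (mu : X -> Y -> R).
Hypothesis mu_ge0 : forall x y, 0 <= mu x y.
Hypothesis mu_sum1 : \sum_(x : X) \sum_(y : Y) mu x y = 1.
Hypothesis mu_supp : forall x y, 0 < mu x y -> f x y = true.
Local Open Scope ereal_scope.

Definition amortized_CC (q : nat) : \bar R :=
  CC_proof (fpow f q) (ones q) (mupow mu q) * ((q%:R : R)^-1)%:E.

Lemma amortized_CC_ge0 q : 0 <= amortized_CC q.
Proof.
apply: mule_ge0; last by rewrite lee_fin invr_ge0.
apply/ereal_infP => _ [ms [w [aA [aB [hp ->]]]]]; rewrite lee_fin.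
apply: sumr_ge0 => xs _; apply: sumr_ge0 => ys _; apply: sumr_ge0 => m _.
by case: hp => hw _ _; rewrite !mulr_ge0 ?ler0n ?(mupow_ge0 mu_ge0) ?(w_ge0 hw).
Qed.

Lemma q_IC_le_length (v t : R) q ms w accA accB :
  (1 < t)%R -> v%:E <= IC_ext_proof f true mu ->
  is_a_proof (fpow f q) (ones q) ms w accA accB ->
  (q%:R * v <= log2 (2 * t) * exp_len (mupow mu q) ms w - log2 (1 - t^-1))%R.
Proof.
move=> t_gt1 hv hp; have [hw _ _] := hp.
have hqv : (q%:R * v)%:E <= (ext_info (mupow mu q) ms w)%:E.
  apply: le_trans (q_IC_le_info mu_ge0 mu_sum1 mu_supp hp).
  by rewrite EFinM; apply: lee_wpmul2l => //; rewrite lee_fin.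
rewrite lee_fin in hqv; apply: le_trans hqv _.
by apply: info_le_length => //; [exact: mupow_ge0 | exact: mupow_sum1].
Qed.

(* for 0 < r < v <= IC, eventually CC_q / q >= r: choose t with
   r log2(2t) < v; the constant -log2(1 - 1/t) is then absorbed for large q *)
Lemma amortized_CC_eventually_ge (r v : R) : (0 < r)%R -> (r < v)%R ->
  v%:E <= IC_ext_proof f true mu ->
  exists N, forall q, (N <= q)%N -> r%:E <= amortized_CC q.
Proof.
move=> r0 rv hv; have [t t_gt1 rK] := exists_close_t r0 rv.
have K0 : (0 < log2 (2 * t))%R.
  rewrite /log2 divr_gt0 ?ln2_gt0 // ln_gt0 //.
  by rewrite (lt_le_trans _ (ler_wpM2l _ (ltW t_gt1))) ?mulr1 ?ltr1n.
set K := log2 (2 * t) in rK K0 *; set L := (- log2 (1 - t^-1))%R.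
pose D := (v - r * K)%R; have D0 : (0 < D)%R by rewrite subr_gt0.
exists (Num.truncn (`|L| / D)).+1 => q hq.
have q0 : (0 < q)%N by apply: leq_trans hq.
have hqD : (L < q%:R * D)%R.
  rewrite -ltr_pdivrMr //.
  apply: (@le_lt_trans _ _ (`|L| / D)%R); first by rewrite ler_pM2r ?invr_gt0 // ler_norm.
  by apply: lt_le_trans (truncnS_gt _) _; rewrite ler_nat.
have hCC : (r * q%:R)%:E <= CC_proof (fpow f q) (ones q) (mupow mu q).
  apply/ereal_infP => _ [ms [w [aA [aB [hp ->]]]]]; rewrite lee_fin.
  have := q_IC_le_length t_gt1 hv hp; rewrite -/K -/L => hk.
  rewrite -(ler_pM2r K0); rewrite /D in hqD; lra.
rewrite /amortized_CC; move: hCC.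
have qi0 : (0 < (q%:R : R)^-1)%R by rewrite invr_gt0 ltr0n.
case: (CC_proof _ _ _) => [y||] //.
- rewrite -EFinM !lee_fin => h.
  by rewrite ler_pdivlMr ?ltr0n // (le_trans _ h) // mulrC.
- by move=> _; rewrite gt0_mulye ?leey // lte_fin.
Qed.

End Amortized.

Theorem theorem1p1 (R : realType) (X Y : finType) (f : X -> Y -> bool)
    (mu : X -> Y -> R)
    (mu_ge0 : forall x y, 0 <= mu x y)
    (mu_sum1 : \sum_(x : X) \sum_(y : Y) mu x y = 1)
    (mu_supp : forall x y, 0 < mu x y -> f x y = true) :
  (IC_ext_proof f true mu <=
   limn_einf (fun q : nat =>
     CC_proof (fpow f q) (ones q) (mupow mu q) * ((q%:R : R)^-1)%:E))%E.
Proof.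
apply: le_by_real_gaps => [|r v r0 rv hv].
  by apply: (limn_einf_ge (N := 0)) => q _; exact: (amortized_CC_ge0 f mu_ge0).
have [N hN] := amortized_CC_eventually_ge mu_ge0 mu_sum1 mu_supp r0 rv hv.
exact: limn_einf_ge hN.
Qed.
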